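(* Let two realisations of local affine Gaudin models be given, labelled $k\in\{1,2\}$, built on the same $\mathfrak g$, $\mathfrak g_0$, $\mathbb D$ and with the same constant $\ell^\infty\in\mathbb R\setminus\{0\}$. Model $k$ has site set $\Sigma^{(k)}$ (with $\Sigma^{(1)}\cap\Sigma^{(2)}=\emptyset$), multiplicities $m_\alpha$, levels $\ell^\alpha_{[p]}$, positions $z_\alpha$, Takiff currents $\mathcal J^\alpha_{[p]}(x)$ in a Poisson algebra $\mathcal A_k$, twist function $\varphi_k(z)=\sum_{\alpha\in\Sigma^{(k)}}\sum_{p=0}^{m_\alpha-1}\frac{\ell^\alpha_{[p]}}{(z-z_\alpha)^{p+1}}-\ell^\infty$ and Gaudin Lax matrix $\Gamma_k(z,x)=\sum_{\alpha\in\Sigma^{(k)}}\sum_{p=0}^{m_\alpha-1}\frac{\mathcal J^\alpha_{[p]}(x)}{(z-z_\alpha)^{p+1}}$. Let $M_k=\sum_{\alpha\in\Sigma^{(k)}}m_\alpha$, $M=M_1+M_2$, and assume the zeros of $\varphi_1$, labelled $\zeta^{(1)}_i$ ($1\le i\le M_1$), and those of $\varphi_2$, labelled $\zeta^{(2)}_i$ ($M_1<i\le M$), are simple. Let $\epsilon^{(1)}_i$ ($1\le i\le M_1$), $\epsilon^{(2)}_i$ ($M_1<i\le M$) be numbers and $\mathcal H_k=\sum_i\epsilon^{(k)}_i\mathcal Q^{(k)}_i$ with $\mathcal Q^{(k)}_i=-\frac{1}{2\varphi_k'(\zeta^{(k)}_i)}\int_{\mathbb D}dx\,\kappa\big(\Gamma_k(\zeta^{(k)}_i,x),\Gamma_k(\zeta^{(k)}_i,x)\big)$.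 For a real $\gamma\neq0$, consider the coupled model on $\mathcal A_1\otimes\mathcal A_2$ with sites $\Sigma^{(1)}\sqcup\Sigma^{(2)}$, the same multiplicities, levels and currents, the same constant $\ell^\infty$, and positions $w_\alpha=z_\alpha$ for $\alpha\in\Sigma^{(1)}$ and $w_\alpha=z_\alpha+\gamma^{-1}$ for $\alpha\in\Sigma^{(2)}$; its twist function is $\varphi_{1\otimes2,\gamma}(z)=\varphi_1(z)+\varphi_2(z-\gamma^{-1})+\ell^\infty$ and its Gaudin Lax matrix $\Gamma_{1\otimes 2,\gamma}(z,x)=\Gamma_1(z,x)+\Gamma_2(z-\gamma^{-1},x)$. Then: (i) for $\gamma$ small enough, one can order the $M$ zeros $\zeta_i(\gamma)$, $i\in\{1,\dots,M\}$, of $\varphi_{1\otimes2,\gamma}$ in such a way that $\zeta_i(\gamma)$ is canonically associated with $\zeta^{(k)}_i$, where $k=1$ if $i\le M_1$ and $k=2$ if $i>M_1$ (namely $\zeta_i(\gamma)\to\zeta^{(1)}_i$ for $i\le M_1$ and $\zeta_i(\gamma)-\gamma^{-1}\to\zeta^{(2)}_i$ for $i>M_1$ as $\gamma\to0$); moreover, for $\gamma$ small enough these zeros are simple. (ii) If one chooses $\epsilon_i=\epsilon^{(k)}_i$ (with $k$ as in (i)), then the coupled Hamiltonian $\mathcal H_\gamma=\sum_{i=1}^M\epsilon_i\Big(-\frac{1}{2\varphi_{1\otimes2,\gamma}'(\zeta_i(\gamma))}\int_{\mathbb D}dx\,\kappa\big(\Gamma_{1\otimes2,\gamma}(\zeta_i(\gamma),x),\Gamma_{1\otimes2,\gamma}(\zeta_i(\gamma),x)\big)\Big)$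 satisfies $\mathcal H_\gamma\to\mathcal H_1+\mathcal H_2$ as $\gamma\to0$.
   Context: $\mathfrak g$ is a finite-dimensional simple complex Lie algebra, $\kappa$ is minus its Killing form, $(I_a)$ a basis with $\kappa$-dual basis $(I^a)$, $C_{12}=I_a\otimes I^a$. $\mathfrak g_0$ is a real form, the fixed points of an antilinear involutive automorphism $\tau$. $\mathbb D$ is $\mathbb R$ or the circle, with coordinate $x$; $\delta_{xy}=\delta(x-y)$, $\delta'_{xy}=\partial_x\delta(x-y)$. A realisation of a local affine Gaudin model consists of: finite sets $\Sigma_r$ (real sites) and $\Sigma_c$ (complex sites), for each complex site $\alpha$ a conjugate site $\bar\alpha$, and $\Sigma=\Sigma_r\sqcup\Sigma_c\sqcup\bar\Sigma_c$; multiplicities $m_\alpha\ge1$ ($m_{\bar\alpha}=m_\alpha$); levels $\ell^\alpha_{[p]}$, $0\le p\le m_\alpha-1$, real for real sites, complex for complex sites, $\ell^{\bar\alpha}_{[p]}=\overline{\ell^\alpha_{[p]}}$, with $\ell^\alpha_{[m_\alpha-1]}\neq0$; pairwise distinct positions $z_\alpha$, real for real sites, $z_{\bar\alpha}=\overline{z_\alpha}$; a Poisson algebra $\mathcal A$ of local observables of a field theory on $\mathbb D$ containing $\mathfrak g$-valued fields $\mathcal J^\alpha_{[p]}(x)$ with $\{\mathcal J^\alpha_{[p]}{}_1(x),\mathcal J^\beta_{[q]}{}_2(y)\}=\delta_{\alpha\beta}\big([C_{12},\mathcal J^\alpha_{[p+q]}{}_1(x)]\delta_{xy}-\ell^\alpha_{[p+q]}C_{12}\delta'_{xy}\big)$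 if $p+q<m_\alpha$ and $0$ otherwise, and $\tau(\mathcal J^\alpha_{[p]})=\mathcal J^\alpha_{[p]}$ for real $\alpha$, $\tau(\mathcal J^\alpha_{[p]})=\mathcal J^{\bar\alpha}_{[p]}$ for complex $\alpha$. The tensor product $\mathcal A_1\otimes\mathcal A_2$ denotes the Poisson algebra generated by the fields of both algebras, with fields from different factors Poisson commuting. Sums over sites of model $k$ run over all its sites (real, complex and conjugate). *)

From HB Require Import structures.
From mathcomp Require Import all_boot all_order all_algebra.
From mathcomp Require Import all_classical all_reals all_analysis.
From mathcomp Require Import complex.
Import Order.TTheory GRing.Theory Num.Theory.
Import numFieldNormedType.Exports.

Set Implicit Arguments.
Unset Strict Implicit.
Unset Printing Implicit Defensive.

Local Open Scope ring_scope.
Local Open Scope classical_set_scope.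

(* Standard (norm) topology / normed-module structure on R[i] over itself,
   so that limits and the complex derivative  derive1  make sense on R[i]. *)
HB.instance Definition _ (R : realType) := GRing.ComAlgebra.copy R[i] (R[i])^o.
HB.instance Definition _ (R : realType) := NormedModule.copy R[i] (R[i])^o.

Section GaudinDefs.
Variable R : realType.
Local Notation C := (R[i]).

Definition RtoC (x : R) : C := Complex x 0.

(* The Lie algebra g : C^n (row vectors) with bracket given by structure
   constants  [e_a, e_b] = \sum_c f a b c e_c  in the basis (e_a).      *)
Section Lie.
Variable n : nat.
Variable f : 'I_n -> 'I_n -> 'I_n -> C.

Definition lie_br (u v : 'rV[C]_n) : 'rV[C]_n :=
  \row_c \sum_a \sum_b u 0 a * v 0 b * f a b c.

Definition is_lie_algebra : Prop :=
  (forall u, lie_br u u = 0) /\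
  (forall u v w, lie_br u (lie_br v w) + lie_br v (lie_br w u)
                 + lie_br w (lie_br u v) = 0).

(* V (a matrix, through its row space) is an ideal of g *)
Definition lie_ideal (V : 'M[C]_n) : Prop :=
  forall u v : 'rV[C]_n, (u <= V)%MS -> (lie_br v u <= V)%MS.

Definition is_simple_lie : Prop :=
  is_lie_algebra /\ (exists u v, lie_br u v != 0) /\
  (forall V : 'M[C]_n, lie_ideal V -> \rank V = 0%N \/ \rank V = n).

(* matrix of ad u acting on row vectors:  v *m ad u = [u, v] *)
Definition ad (u : 'rV[C]_n) : 'M[C]_n :=
  \matrix_(b, c) \sum_a u 0 a * f a b c.

Definition killing (u v : 'rV[C]_n) : C := \tr (ad u *m ad v).

Definition kappa (u v : 'rV[C]_n) : C := - killing u v.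

(* tau : antilinear involutive automorphism of g; g_0 = its fixed points *)
Definition is_real_form (tau : 'rV[C]_n -> 'rV[C]_n) : Prop :=
  [/\ (forall u v, tau (u + v) = tau u + tau v),
      (forall (c : C) u, tau (c *: u) = conjc c *: tau u),
      (forall u, tau (tau u) = u) &
      (forall u v, tau (lie_br u v) = lie_br (tau u) (tau v))].
End Lie.

(* Space D: None = the real line, Some L = the circle of length L,
   realised as [0, L[ with periodic fields; dx = Lebesgue measure.     *)
Definition Ddom (circ : option R) : set R :=
  if circ is Some L then `[0, L[ else setT.

Definition cint (circ : option R) (g : R -> C) : C :=
  Complex (Rintegral (@lebesgue_measure R) (Ddom circ) (fun x => complex.Re (g x)))
          (Rintegral (@lebesgue_measure R) (Ddom circ) (fun x => complex.Im (g x))).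

(* S : sites (Sigma);  sg : S -> S the involution alpha |-> conjugate site
   (real sites = fixed points of sg, complex sites paired with their
   conjugates);  m : multiplicities;  l a p = level l^a_[p];  z : positions. *)
Definition is_realisation (S : finType) (sg : S -> S) (m : S -> nat)
    (l : S -> nat -> C) (z : S -> C) : Prop :=
  (forall a, sg (sg a) = a) /\
  (forall a, (0 < m a)%N) /\
  (forall a, m (sg a) = m a) /\
  (forall a p, (p < m a)%N -> l (sg a) p = conjc (l a p)) /\
  (forall a, l a (m a).-1 != 0) /\
  (forall a, z (sg a) = conjc (z a)) /\
  injective z.

Definition nsum (S : finType) (m : S -> nat) : nat := (\sum_(a : S) m a)%N.

Definition twist (S : finType) (m : S -> nat) (l : S -> nat -> C) (z : S -> C)
    (linf : R) (w : C) : C :=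
  \sum_(a : S) \sum_(p < m a) l a p / (w - z a) ^+ p.+1 - RtoC linf.

Definition lax (n : nat) (S : finType) (m : S -> nat) (z : S -> C)
    (J : S -> nat -> R -> 'rV[C]_n) (w : C) (x : R) : 'rV[C]_n :=
  \sum_(a : S) \sum_(p < m a) ((w - z a) ^+ p.+1)^-1 *: J a p x.

Definition simple_zero_enum (phi : C -> C) (poles : set C) (M : nat)
    (zeta : 'I_M -> C) : Prop :=
  [/\ injective zeta,
      (forall i, ~ poles (zeta i) /\ phi (zeta i) = 0 /\ derive1 phi (zeta i) != 0) &
      (forall w, ~ poles w -> phi w = 0 -> exists i, w = zeta i)].

Definition charge (n : nat) (f : 'I_n -> 'I_n -> 'I_n -> C) (circ : option R)
    (S : finType) (m : S -> nat) (l : S -> nat -> C) (z : S -> C) (linf : R)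
    (J : S -> nat -> R -> 'rV[C]_n) (zeta : C) : C :=
  - (2 * derive1 (twist m l z linf) zeta)^-1 *
    cint circ (fun x => kappa f (lax m z J zeta x) (lax m z J zeta x)).

Definition hamiltonian (n : nat) (f : 'I_n -> 'I_n -> 'I_n -> C) (circ : option R)
    (S : finType) (m : S -> nat) (l : S -> nat -> C) (z : S -> C) (linf : R)
    (J : S -> nat -> R -> 'rV[C]_n) (M : nat) (zeta : 'I_M -> C) (eps : 'I_M -> C) : C :=
  \sum_(i < M) eps i * charge f circ m l z linf J (zeta i).

(* A configuration of the Takiff currents J^a_[p](x) (a classical-field
   realisation of the Poisson algebra A): reality condition w.r.t. tau,
   periodicity on the circle, and local integrability of all the
   quadratic densities kappa(J^a_p, J^b_q) over D. *)
Definition admissible_config (n : nat) (f : 'I_n -> 'I_n -> 'I_n -> C)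
    (tau : 'rV[C]_n -> 'rV[C]_n) (circ : option R)
    (S : finType) (sg : S -> S) (m : S -> nat) (J : S -> nat -> R -> 'rV[C]_n) : Prop :=
  [/\ (forall a p x, (p < m a)%N -> tau (J a p x) = J (sg a) p x),
      (forall L, circ = Some L -> forall a p x, J a p (x + L) = J a p x) &
      (forall a b p q, (p < m a)%N -> (q < m b)%N ->
         (@lebesgue_measure R).-integrable (Ddom circ)
            (EFin \o (fun x => complex.Re (kappa f (J a p x) (J b q x)))) /\
         (@lebesgue_measure R).-integrable (Ddom circ)
            (EFin \o (fun x => complex.Im (kappa f (J a p x) (J b q x)))))].

Definition sumf (S1 S2 : finType) (X : Type) (f1 : S1 -> X) (f2 : S2 -> X)
    (s : (S1 + S2)%type) : X :=
  match s with inl a => f1 a | inr b => f2 b end.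

Definition sum_sg (S1 S2 : finType) (sg1 : S1 -> S1) (sg2 : S2 -> S2)
    (s : (S1 + S2)%type) : (S1 + S2)%type :=
  match s with inl a => inl (sg1 a) | inr b => inr (sg2 b) end.

Definition cpos (S1 S2 : finType) (z1 : S1 -> C) (z2 : S2 -> C) (gamma : R) :
    (S1 + S2)%type -> C :=
  sumf z1 (fun b => z2 b + RtoC gamma^-1).

Definition sum_idx (M1 M2 : nat) (X : Type) (e1 : 'I_M1 -> X) (e2 : 'I_M2 -> X)
    (i : 'I_(M1 + M2)) : X :=
  match fintype.split i with inl i1 => e1 i1 | inr i2 => e2 i2 end.

Definition coupled_zero_ordering (S1 S2 : finType) (m1 : S1 -> nat) (m2 : S2 -> nat)
    (l1 : S1 -> nat -> C) (l2 : S2 -> nat -> C) (z1 : S1 -> C) (z2 : S2 -> C)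
    (linf : R) (M1 M2 : nat) (zeta1 : 'I_M1 -> C) (zeta2 : 'I_M2 -> C)
    (zeta : R -> 'I_(M1 + M2) -> C) : Prop :=
  [/\ (exists2 d : R, 0 < d & forall g : R, 0 < `|g| < d ->
         simple_zero_enum (twist (sumf m1 m2) (sumf l1 l2) (cpos z1 z2 g) linf)
                          (range (cpos z1 z2 g)) (zeta g)),
      (forall i : 'I_M1, zeta g (lshift M2 i) @[g --> (0 : R)^'] --> zeta1 i) &
      (forall j : 'I_M2, (zeta g (rshift M1 j) - RtoC g^-1) @[g --> (0 : R)^']
                           --> zeta2 j)].

End GaudinDefs.

From Pilot Require Import Defs.
From HB Require Import structures.
From mathcomp Require Import all_boot all_order all_algebra.
From mathcomp Require Import all_classical all_reals all_analysis.
From mathcomp Require Import complex.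
From mathcomp Require Import ring zify.
Import Order.TTheory GRing.Theory Num.Theory.
Import numFieldNormedType.Exports.
Local Open Scope ring_scope.
Local Open Scope classical_set_scope.

Set Implicit Arguments.
Unset Strict Implicit.
Unset Printing Implicit Defensive.

(* In the coordinates [v_a = 1 / (w - z_a)] the twist function, its derivative
   and the quadratic charges are polynomials, so everything is continuous in
   [v].  Near a zero of [phi_1], the inverse distances to the sites of the second
   model tend to 0, hence the coupled quantities tend to those of the first
   model; symmetrically near [zeta^(2)_j + 1/gamma].

   For the zeros, write the coupled twist function as [num / pole_poly] with
   [num] of degree [M] and leading coefficient [-l_infty].  Comparing [|num|] at
   a target point [t] (a shifted zero of [phi_1] or [phi_2]) and at a regular
   point [t'] at a fixed offset from [t] shows that the product of the
   distances from [t] to the roots of [num] becomes arbitrarily small compared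
   with the one from [t'], so some root approaches [t].  For small [gamma] the
   [M] targets are far apart, so each of the [M] disjoint disks around them
   holds exactly one of the [M] roots; they are therefore simple, and the twist
   function has nonzero derivative there. *)

Section NumFieldLimits.
Context (K : numFieldType) (T : Type) (F : set_system T) {FF : Filter F}.

Lemma cvg_sumr (I : Type) (r : seq I) (f : I -> T -> K) (a : I -> K) :
  (forall i, f i x @[x --> F] --> a i) ->
  \sum_(i <- r) f i x @[x --> F] --> \sum_(i <- r) a i.
Proof. by move=> fa; apply: cvg_big => //; exact: add_continuous. Qed.

Lemma cvg_prodr (I : Type) (r : seq I) (f : I -> T -> K) (a : I -> K) :
  (forall i, f i x @[x --> F] --> a i) ->
  \prod_(i <- r) f i x @[x --> F] --> \prod_(i <- r) a i.
Proof. by move=> fa; apply: cvg_big => //; exact: mul_continuous. Qed.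

Lemma cvgXn (f : T -> K) (a : K) n :
  f x @[x --> F] --> a -> f x ^+ n @[x --> F] --> a ^+ n.
Proof.
move=> fa; elim: n => [|n IH].
  by rewrite expr0; under eq_fun do rewrite expr0; exact: cvg_cst.
by rewrite exprS; under eq_fun do rewrite exprS; exact: cvgM.
Qed.

Lemma cvg_horner (p : {poly K}) (f : T -> K) (a : K) :
  f x @[x --> F] --> a -> p.[f x] @[x --> F] --> p.[a].
Proof.
move=> fa; elim/poly_ind: p => [|p c IH].
  by rewrite horner0; under eq_fun do rewrite horner0; exact: cvg_cst.
rewrite hornerMXaddC; under eq_fun do rewrite hornerMXaddC.
exact: cvgD (cvgM IH fa) (cvg_cst c).
Qed.

Lemma near_norm_lt (f g : T -> K) (b : K) :
  f x @[x --> F] --> 0 -> g x @[x --> F] --> b -> b != 0 ->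
  \forall x \near F, `|f x| < `|g x|.
Proof.
move=> f0 gb b0.
have b2 : 0 < `|b| / 2 by rewrite divr_gt0 // normr_gt0.
move/cvgrPdist_lt : f0 => /(_ _ b2) f0; move/cvgrPdist_lt : gb => /(_ _ b2) gb.
near=> x.
have fx : `|f x| < `|b| / 2 by rewrite -normrN -sub0r; near: x.
have gx : `|b| / 2 < `|g x|.
  have : `|b - g x| < `|b| / 2 by near: x.
  have := ler_distD (g x) b 0; rewrite !subr0 => tri lt.
  have : `|b| < `|b| / 2 + `|g x| by apply: le_lt_trans tri _; rewrite ltrD2r.
  by rewrite -ltrBlDl {1}(splitr `|b|) addrK.
exact: lt_trans fx gx.
Unshelve. all: by end_near.
Qed.

End NumFieldLimits.

Lemma posr_lbound_fin (K : numFieldType) (I : finType) (f : I -> K) :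
  (forall i, 0 < f i) -> exists2 e : K, 0 < e & forall i, e <= f i.
Proof.
move=> fpos.
have s0 : 0 <= \sum_i (f i)^-1 by apply: sumr_ge0 => i _; rewrite invr_ge0 ltW.
have s1 : 0 < 1 + \sum_i (f i)^-1 by rewrite ltr_wpDr.
exists (1 + \sum_i (f i)^-1)^-1; first by rewrite invr_gt0.
move=> i; rewrite -[f i]invrK lef_pV2 ?posrE ?invr_gt0 //.
rewrite (bigD1 i) //= addrCA lerDl addr_ge0 //.
by apply: sumr_ge0 => j _; rewrite invr_ge0 ltW.
Qed.

Lemma posr_lbound2 (K : numFieldType) (e1 e2 : K) : 0 < e1 -> 0 < e2 ->
  exists2 e : K, 0 < e & e <= e1 /\ e <= e2.
Proof.
move=> e1pos e2pos.
have [e epos le] : exists2 e : K, 0 < e & forall b : bool, e <= if b then e1 else e2.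
  by apply: posr_lbound_fin => -[].
by exists e => //; split; [exact: le true | exact: le false].
Qed.

Lemma near_lbound_fin (K : numFieldType) (T : Type) (F : set_system T) {FF : Filter F}
    (I : finType) (P : pred I) (f : I -> T -> K) :
  (forall i, P i -> exists2 e, 0 < e & \forall x \near F, e <= f i x) ->
  exists2 e, 0 < e & \forall x \near F, forall i, P i -> e <= f i x.
Proof.
move=> lb.
have lb' i : exists e : K, 0 < e /\ (P i -> \forall x \near F, e <= f i x).
  by case: (boolP (P i)) => [/lb[e e0 near_e]|_]; [exists e | exists 1].
have [e eP] := boolp.choice lb'.
have [e0 e0pos le_e0] := posr_lbound_fin (fun i => (eP i).1).
exists e0 => //; apply: filter_forall => i; have [Pi|nPi] := boolP (P i).
  by apply: filterS ((eP i).2 Pi) => x le_x _; apply: le_trans (le_e0 i) le_x.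
by apply: nearW => x Pi; case/negP: nPi.
Qed.

Lemma is_derive_sum_seq (K : numFieldType) (V W : normedModType K) (I : Type) (r : seq I)
    (h : I -> V -> W) (dh : I -> W) (x v : V) :
  (forall i, is_derive x v (h i) (dh i)) ->
  is_derive x v (fun y => \sum_(i <- r) h i y) (\sum_(i <- r) dh i).
Proof.
move=> hdh; elim: r => [|i r IH].
  rewrite big_nil (_ : (fun _ => _) = cst 0); first exact: is_derive_cst.
  by apply/funext => y; rewrite big_nil.
rewrite big_cons (_ : (fun _ => _) = h i + (fun y => \sum_(j <- r) h j y)).
  exact: is_deriveD.
by apply/funext => y; rewrite big_cons.
Qed.

Lemma size_prod_XsubC_exp (K : idomainType) (I : Type) (r : seq I) (P : pred I)
    (z : I -> K) (m : I -> nat) :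
  size (\prod_(b <- r | P b) ('X - (z b)%:P) ^+ m b) = (\sum_(b <- r | P b) m b).+1.
Proof.
elim: r => [|b r IH]; first by rewrite !big_nil size_poly1.
rewrite !big_cons; case: (P b) => //.
rewrite size_Mmonic ?monic_neq0 ?monic_exp ?monicXsubC //; last first.
  by apply: monic_prod => i _; rewrite monic_exp ?monicXsubC.
by rewrite size_exp_XsubC IH addSn addnS.
Qed.

Lemma exists_notin_seq (K : numDomainType) (s : seq K) : exists x : K, x \notin s.
Proof.
apply: contrapT => all_in.
have sub : {subset [seq k%:R | k <- iota 0 (size s).+1] <= s}.
  by move=> x _; apply: contrapT => /negP x_notin; apply: all_in; exists x.
have uniq_nat : uniq [seq k%:R : K | k <- iota 0 (size s).+1].
  by rewrite map_inj_uniq ?iota_uniq // => a b /eqP; rewrite eqr_nat => /eqP.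
by have := uniq_leq_size uniq_nat sub; rewrite size_map size_iota ltnn.
Qed.

(** * Roots in disjoint disks *)

Section RootsInDisks.
Variable K : numFieldType.

Lemma one_root_per_disk N (rs : seq K) (t : 'I_N -> K) (d : K) :
  size rs = N ->
  (forall i j w, `|w - t i| < d -> `|w - t j| < d -> i = j) ->
  (forall i, exists r, r \in rs /\ `|r - t i| < d) ->
  [/\ uniq rs, (forall r, r \in rs -> exists i, `|r - t i| < d) &
      forall i r r', r \in rs -> r' \in rs -> `|r - t i| < d -> `|r' - t i| < d -> r = r'].
Proof.
move=> size_rs disjoint hit.
have [pick pickP] := boolp.choice hit.
have pick_near i : `|pick i - t i| < d by case: (pickP i).
have pick_inj : injective pick.
  by move=> i j eq_ij; apply: (disjoint i j (pick i)); rewrite // eq_ij.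
pose picked := [seq pick i | i <- enum 'I_N].
have uniq_picked : uniq picked by rewrite map_inj_uniq // enum_uniq.
have sub_picked : {subset picked <= rs} by move=> r /mapP[i _ ->]; case: (pickP i).
have size_picked : size picked = N by rewrite size_map size_enum_ord.
have [_ picked_rs] :=
  uniq_min_size uniq_picked sub_picked (eq_leq (etrans size_rs (esym size_picked))).
have rs_picked r : r \in rs -> exists i, r = pick i.
  by rewrite -picked_rs => /mapP[i _ ->]; exists i.
split.
- by rewrite (uniq_size_uniq uniq_picked picked_rs) size_picked size_rs.
- by move=> r /rs_picked[i ->]; exists i.
move=> i r r' /rs_picked[j ->] /rs_picked[k ->] near_j near_k.
by rewrite -(disjoint _ _ _ near_j (pick_near j)) -(disjoint _ _ _ near_k (pick_near k)).
Qed.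

Lemma prod_dist_le (rs : seq K) (t t' d : K) : 0 <= d ->
  (forall r, r \in rs -> d <= `|t - r|) ->
  d ^+ size rs * \prod_(r <- rs) `|t' - r| <=
    \prod_(r <- rs) `|t - r| * (d + `|t - t'|) ^+ size rs.
Proof.
move=> d0; elim: rs => [|r rs IH] far; first by rewrite !big_nil !expr0 mul1r.
rewrite !big_cons /= !exprS mulrACA [X in _ <= X]mulrACA.
apply: ler_pM; rewrite ?mulr_ge0 ?exprn_ge0 ?prodr_ge0 //; last first.
  by apply: IH => x xrs; apply: far; rewrite in_cons xrs orbT.
have far_r : d <= `|t - r| by apply: far; rewrite mem_head.
have tri : `|t' - r| <= `|t - r| + `|t - t'|.
  by rewrite [X in _ <= X]addrC (distrC t t'); exact: ler_distD.
apply: le_trans (ler_wpM2l d0 tri) _.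
by rewrite !mulrDr [X in _ <= X + _]mulrC lerD2l ler_wpM2r.
Qed.

Lemma exists_near_root (rs : seq K) (t t' d : K) : 0 < d ->
  \prod_(r <- rs) `|t - r| * (d + `|t - t'|) ^+ size rs <
    d ^+ size rs * \prod_(r <- rs) `|t' - r| ->
  exists r, r \in rs /\ `|r - t| < d.
Proof.
move=> d0 lt_prod; apply: contrapT => no_root.
have far r : r \in rs -> d <= `|t - r|.
  move=> rrs; rewrite (real_leNgt (gtr0_real d0) (normr_real _)).
  by apply/negP => lt_d; apply: no_root; exists r; rewrite distrC.
by have := lt_le_trans lt_prod (prod_dist_le t' (ltW d0) far); rewrite ltxx.
Qed.

End RootsInDisks.

Lemma near_dnbhs0P (R : realType) (P : R -> Prop) :
  (\forall g \near (0 : R)^', P g) <-> exists2 d : R, 0 < d & forall g, 0 < `|g| < d -> P g.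
Proof.
split=> [near_P|[d d0 ball_P]].
  have : nbhs (0 : R) (fun g => g != 0 -> P g) by exact: near_P.
  move/nbhs_ballP => [d d0 ball_P]; exists d => // g /andP[g0 gd].
  by apply: ball_P; rewrite -?normr_gt0 // -ball_normE /ball_ /= sub0r normrN.
near=> g; apply: ball_P; apply/andP; split.
  by rewrite normr_gt0; near: g; exact: nbhs_dnbhs_neq.
by near: g; exact: dnbhs0_lt.
Unshelve. all: by end_near.
Qed.

(** * Poles shifted by [1 / gamma] *)

Section ShiftedPoles.
Variable R : realType.
Local Notation C := R[i].

Lemma RtoC_eq0 (x : R) : (RtoC x == 0) = (x == 0).
Proof. by rewrite /RtoC eq_complex /= eqxx andbT. Qed.

Lemma RtoCV (x : R) : RtoC x^-1 = (RtoC x)^-1.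
Proof. exact: (fmorphV (real_complex R)). Qed.

Lemma normRtoC (x : R) : `|RtoC x| = RtoC `|x|.
Proof. by rewrite normc_def /= expr0n /= addr0 sqrtr_sqr. Qed.

Lemma cvg_RtoC0 : RtoC g @[g --> (0 : R)^'] --> 0.
Proof.
apply/cvgrPdist_lt => -[e b]; rewrite ltcE /= => /andP[/eqP -> e0].
have : (fun g : R => g) @ (0 : R)^' --> (0 : R) by exact: cvg_within.
move/cvgrPdist_lt => /(_ _ e0); apply: filterS => g.
by rewrite !sub0r !normrN normRtoC ltcE /= eqxx.
Qed.

Lemma near_shift_far (c : R -> C) (c0 K : C) : 0 < K ->
  c g @[g --> (0 : R)^'] --> c0 -> \forall g \near (0 : R)^', K <= `|c g - RtoC g^-1|.
Proof.
move=> K0 cc0.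
have lim_num : c g * RtoC g - 1 @[g --> (0 : R)^'] --> c0 * 0 - 1.
  exact: cvgB (cvgM cc0 cvg_RtoC0) (cvg_cst (1 : C)).
have lim_KRtoC : K * RtoC g @[g --> (0 : R)^'] --> 0.
  by rewrite -(mulr0 K); exact: cvgM (cvg_cst K) cvg_RtoC0.
have num_neq0 : c0 * 0 - 1 != 0 by rewrite mulr0 sub0r oppr_eq0 oner_eq0.
near=> g.
have lt_num : `|K * RtoC g| < `|c g * RtoC g - 1|.
  by near: g; exact: near_norm_lt lim_KRtoC lim_num num_neq0.
have g0 : RtoC g != 0 by rewrite RtoC_eq0; near: g; exact: nbhs_dnbhs_neq.
have -> : c g - RtoC g^-1 = (c g * RtoC g - 1) / RtoC g.
  by rewrite RtoCV mulrBl mulfK // mul1r.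
rewrite normrM normfV ler_pdivlMr ?normr_gt0 //.
by rewrite normrM (gtr0_norm K0) in lt_num; exact: ltW.
Unshelve. all: by end_near.
Qed.

Lemma near_shift_neq0 (c : R -> C) (c0 : C) :
  c g @[g --> (0 : R)^'] --> c0 -> \forall g \near (0 : R)^', c g - RtoC g^-1 != 0.
Proof.
move=> /(near_shift_far ltr01); apply: filterS => g.
by apply: contraTneq => ->; rewrite normr0 ler10.
Qed.

Lemma cvg_shift_inv0 (c : R -> C) (c0 : C) :
  c g @[g --> (0 : R)^'] --> c0 -> (c g - RtoC g^-1)^-1 @[g --> (0 : R)^'] --> 0.
Proof.
move=> cc0; apply/cvgrPdist_lt => e e0.
have Kpos : 0 < 2 / e by rewrite divr_gt0.
apply: filterS (near_shift_far Kpos cc0) => g far.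
have x0 : 0 < `|c g - RtoC g^-1| by apply: lt_le_trans far.
rewrite sub0r normrN normfV -(invrK e) ltf_pV2 ?posrE ?invr_gt0 //.
apply: lt_le_trans far; rewrite -[X in X < _]mul1r ltr_pM2r ?invr_gt0 //.
by rewrite ltr1n.
Qed.

End ShiftedPoles.

(** * Integrals over [D] and the Killing form *)

Section ComplexIntegral.
Variable R : realType.
Local Notation C := R[i].
Variable circ : option R.
Local Notation mu := (@lebesgue_measure R).

Definition cintegrable (g : R -> C) : Prop :=
  mu.-integrable (Ddom circ) (EFin \o (fun x => complex.Re (g x))) /\
  mu.-integrable (Ddom circ) (EFin \o (fun x => complex.Im (g x))).

Lemma measurable_Ddom : measurable (Ddom circ : set (measurableTypeR R)).
Proof. by case: circ => [L|] /=; [exact: measurable_itv | exact: measurableT]. Qed.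

Lemma Re_addc (a b : C) : complex.Re (a + b) = complex.Re a + complex.Re b.
Proof. by case: a; case: b. Qed.

Lemma Im_addc (a b : C) : complex.Im (a + b) = complex.Im a + complex.Im b.
Proof. by case: a; case: b. Qed.

Lemma Re_mulc (a b : C) :
  complex.Re (a * b) = complex.Re a * complex.Re b + - complex.Im a * complex.Im b.
Proof. by case: a => a1 a2; case: b => b1 b2 /=; rewrite mulNr. Qed.

Lemma Im_mulc (a b : C) :
  complex.Im (a * b) = complex.Re a * complex.Im b + complex.Im a * complex.Re b.
Proof. by case: a => a1 a2; case: b => b1 b2. Qed.

Lemma integrableD_fin (F G : R -> R) :
  mu.-integrable (Ddom circ) (EFin \o F) -> mu.-integrable (Ddom circ) (EFin \o G) ->
  mu.-integrable (Ddom circ) (EFin \o (fun x => F x + G x)).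
Proof.
move=> iF iG; have -> : EFin \o (fun x => F x + G x) = ((EFin \o F) \+ (EFin \o G))%E.
  by apply/funext => x /=; rewrite EFinD.
exact: (integrableD measurable_Ddom iF iG).
Qed.

Lemma integrableZl_fin (k : R) (F : R -> R) :
  mu.-integrable (Ddom circ) (EFin \o F) ->
  mu.-integrable (Ddom circ) (EFin \o (fun x => k * F x)).
Proof.
move=> iF; have -> : EFin \o (fun x => k * F x) = (fun x => k%:E * (EFin \o F) x)%E.
  by apply/funext => x /=; rewrite EFinM.
exact: (integrableZl measurable_Ddom k iF).
Qed.

Lemma cintegrableD (g h : R -> C) :
  cintegrable g -> cintegrable h -> cintegrable (fun x => g x + h x).
Proof.
move=> [g1 g2] [h1 h2]; split.
  under eq_fun do rewrite Re_addc; exact: integrableD_fin.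
under eq_fun do rewrite Im_addc; exact: integrableD_fin.
Qed.

Lemma cintD (g h : R -> C) : cintegrable g -> cintegrable h ->
  cint circ (fun x => g x + h x) = cint circ g + cint circ h.
Proof.
move=> [g1 g2] [h1 h2]; rewrite /cint.
have -> : (fun x => complex.Re (g x + h x)) = (fun x => complex.Re (g x) + complex.Re (h x)).
  by apply/funext => x; exact: Re_addc.
have -> : (fun x => complex.Im (g x + h x)) = (fun x => complex.Im (g x) + complex.Im (h x)).
  by apply/funext => x; exact: Im_addc.
by rewrite !RintegralD //; exact: measurable_Ddom.
Qed.

Lemma cintegrableMl (c : C) (g : R -> C) :
  cintegrable g -> cintegrable (fun x => c * g x).
Proof.
move=> [g1 g2]; split.
  by under eq_fun do rewrite Re_mulc; apply: integrableD_fin; exact: integrableZl_fin.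
by under eq_fun do rewrite Im_mulc; apply: integrableD_fin; exact: integrableZl_fin.
Qed.

Lemma cintMl (c : C) (g : R -> C) :
  cintegrable g -> cint circ (fun x => c * g x) = c * cint circ g.
Proof.
move=> [g1 g2]; rewrite /cint.
have -> : (fun x => complex.Re (c * g x)) =
    (fun x => complex.Re c * complex.Re (g x) + - complex.Im c * complex.Im (g x)).
  by apply/funext => x; exact: Re_mulc.
have -> : (fun x => complex.Im (c * g x)) =
    (fun x => complex.Re c * complex.Im (g x) + complex.Im c * complex.Re (g x)).
  by apply/funext => x; exact: Im_mulc.
have mD := measurable_Ddom.
rewrite !RintegralD ?RintegralZl //; try exact: integrableZl_fin.
by case: c => c1 c2 /=; rewrite mulNr.
Qed.

Lemma cintegrable_sum (I : Type) (r : seq I) (g : I -> R -> C) :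
  (forall i, cintegrable (g i)) -> cintegrable (fun x => \sum_(i <- r) g i x).
Proof.
move=> ig; elim: r => [|i r IH].
  by under eq_fun do rewrite big_nil; split; exact: integrable0.
by under eq_fun do rewrite big_cons; exact: cintegrableD.
Qed.

Lemma cint_sum (I : Type) (r : seq I) (g : I -> R -> C) :
  (forall i, cintegrable (g i)) ->
  cint circ (fun x => \sum_(i <- r) g i x) = \sum_(i <- r) cint circ (g i).
Proof.
move=> ig; elim: r => [|i r IH].
  under eq_fun do rewrite big_nil.
  by rewrite big_nil /cint /= !Rintegral_cst ?mul0r //; exact: measurable_Ddom.
under eq_fun do rewrite big_cons.
by rewrite big_cons cintD ?IH //; exact: cintegrable_sum.
Qed.

End ComplexIntegral.

Section KillingForm.
Variable R : realType.
Local Notation C := R[i].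
Variables (n : nat) (f : 'I_n -> 'I_n -> 'I_n -> C).

Lemma ad0 : ad f 0 = 0.
Proof. by apply/matrixP => b c; rewrite !mxE big1 // => a _; rewrite mxE mul0r. Qed.

Lemma adD u v : ad f (u + v) = ad f u + ad f v.
Proof.
apply/matrixP => b c; rewrite !mxE -big_split; apply: eq_bigr => a _ /=.
by rewrite mxE mulrDl.
Qed.

Lemma adZ (k : C) u : ad f (k *: u) = k *: ad f u.
Proof.
apply/matrixP => b c; rewrite !mxE mulr_sumr; apply: eq_bigr => a _.
by rewrite mxE mulrA.
Qed.

Lemma kappaC u v : kappa f u v = kappa f v u.
Proof. by rewrite /kappa /killing mxtrace_mulC. Qed.

Lemma kappaZl (k : C) u v : kappa f (k *: u) v = k * kappa f u v.
Proof. by rewrite /kappa /killing adZ -scalemxAl mxtraceZ mulrN. Qed.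

Lemma kappaZr (k : C) u v : kappa f u (k *: v) = k * kappa f u v.
Proof. by rewrite kappaC kappaZl kappaC. Qed.

Lemma kappa_suml (I : Type) (r : seq I) (u : I -> 'rV[C]_n) v :
  kappa f (\sum_(i <- r) u i) v = \sum_(i <- r) kappa f (u i) v.
Proof.
elim: r => [|i r IH]; first by rewrite !big_nil /kappa /killing ad0 mul0mx mxtrace0 oppr0.
by rewrite !big_cons -IH /kappa /killing adD mulmxDl mxtraceD opprD.
Qed.

Lemma kappa_sumr (I : Type) (r : seq I) (u : 'rV[C]_n) (v : I -> 'rV[C]_n) :
  kappa f u (\sum_(i <- r) v i) = \sum_(i <- r) kappa f u (v i).
Proof. by rewrite kappaC kappa_suml; apply: eq_bigr => i _; rewrite kappaC. Qed.

End KillingForm.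

(** * The twist function in inverse-distance coordinates *)

Section InverseDistanceCoordinates.
Variable R : realType.
Local Notation C := R[i].
Variables (S : finType) (m : S -> nat) (l : S -> nat -> C).

Definition inv_dist (z : S -> C) (w : C) : S -> C := fun a => (w - z a)^-1.

Definition twist_v (linf : R) (v : S -> C) : C :=
  \sum_a \sum_(p < m a) l a p * v a ^+ p.+1 - RtoC linf.

Definition dtwist_v (v : S -> C) : C :=
  \sum_a \sum_(p < m a) l a p * (- p.+1%:R * v a ^+ p.+2).

Definition quad_v n (f : 'I_n -> 'I_n -> 'I_n -> C) (circ : option R)
    (J : S -> nat -> R -> 'rV[C]_n) (v : S -> C) : C :=
  \sum_a \sum_(p < m a) \sum_b \sum_(q < m b)
    (v a ^+ p.+1 * v b ^+ q.+1) * cint circ (fun x => kappa f (J a p x) (J b q x)).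

Lemma twist_inv_dist z linf w : twist m l z linf w = twist_v linf (inv_dist z w).
Proof.
rewrite /twist /twist_v; congr (_ - _); apply: eq_bigr => a _; apply: eq_bigr => p _.
by rewrite exprVn.
Qed.

Lemma is_derive_inv_pow (z w : C) k : w != z ->
  is_derive w 1 (fun y : C => ((y - z)^-1) ^+ k) (- k%:R * ((w - z)^-1) ^+ k.+1).
Proof.
move=> wz; have wz0 : w - z != 0 by rewrite subr_eq0.
have dshift : is_derive w (1 : C) (fun y : C => y - z) 1.
  rewrite (_ : (fun y : C => y - z) = id - cst z); last exact/funext.
  exact: is_derive_eq (is_deriveB (is_derive_id w 1) (is_derive_cst z w 1)) (subr0 1).
have dshift' : derivable (fun y : C => y - z) w 1 := @ex_derive _ _ _ _ _ _ _ dshift.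
have dinv : is_derive w (1 : C) (fun y : C => (y - z)^-1) (- (w - z) ^- 2 *: 1).
  apply: DeriveDef; first exact: (@derivableV _ _ (fun y : C => y - z) w 1 wz0 dshift').
  by rewrite (@deriveV _ _ (fun y : C => y - z) w 1 wz0 dshift') (@derive_val _ _ _ _ _ _ _ dshift).
have dpow := is_deriveX k dinv; rewrite exprfctE in dpow.
apply: is_derive_eq dpow _.
have scaleE (a b : C) : a *: b = a * b by [].
rewrite !scaleE !mulr1 -exprVn.
case: k => [|k]; first by rewrite /= !(mul0r, mulr0, oppr0).
by rewrite mulrN mulNr -mulrA -exprD addn2.
Qed.

Lemma is_derive_twist z linf w : (forall a, w != z a) ->
  is_derive w (1 : C) (twist m l z linf) (dtwist_v (inv_dist z w)).
Proof.
move=> wz.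
pose term a (p : 'I_(m a)) := l a p \*: (fun y : C => ((y - z a)^-1) ^+ p.+1).
have dterm a p : is_derive w (1 : C) (term a p) (l a p * (- p.+1%:R * (inv_dist z w a) ^+ p.+2)).
  exact: (is_deriveZ (l a p) (is_derive_inv_pow p.+1 (wz a))).
have dsum := is_derive_sum_seq (index_enum S)
  (fun a => is_derive_sum_seq (index_enum 'I_(m a)) (dterm a)).
rewrite (_ : twist m l z linf = (fun y => \sum_a \sum_(p < m a) term a p y) - cst (RtoC linf)).
  exact: is_derive_eq (is_deriveB dsum (is_derive_cst (RtoC linf) w 1)) (subr0 _).
apply/funext => y; rewrite /twist /=; congr (_ - _).
by apply: eq_bigr => a _; apply: eq_bigr => p _; rewrite /term /= exprVn.
Qed.

Lemma derive1_twist z linf w : (forall a, w != z a) ->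
  derive1 (twist m l z linf) w = dtwist_v (inv_dist z w).
Proof. by move=> wz; rewrite derive1E (@derive_val _ _ _ _ _ _ _ (is_derive_twist linf wz)). Qed.

End InverseDistanceCoordinates.

Section ChargeInCoordinates.
Variable R : realType.
Local Notation C := R[i].
Variables (n : nat) (f : 'I_n -> 'I_n -> 'I_n -> C) (circ : option R).
Variables (S : finType) (m : S -> nat) (l : S -> nat -> C) (linf : R).
Variable J : S -> nat -> R -> 'rV[C]_n.
Hypothesis J_integrable : forall a b p q, (p < m a)%N -> (q < m b)%N ->
  cintegrable circ (fun x => kappa f (J a p x) (J b q x)).

Lemma kappa_lax z w x : let v := inv_dist z w in
  kappa f (lax m z J w x) (lax m z J w x) =
  \sum_a \sum_(p < m a) \sum_b \sum_(q < m b)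
    (v a ^+ p.+1 * v b ^+ q.+1) * kappa f (J a p x) (J b q x).
Proof.
rewrite /lax kappa_suml; apply: eq_bigr => a _; rewrite kappa_suml; apply: eq_bigr => p _.
rewrite kappaZl kappa_sumr mulr_sumr; apply: eq_bigr => b _.
rewrite kappa_sumr mulr_sumr; apply: eq_bigr => q _.
by rewrite kappaZr mulrA /inv_dist !exprVn.
Qed.

Lemma cint_kappa_lax z w :
  cint circ (fun x => kappa f (lax m z J w x) (lax m z J w x)) = quad_v m f circ J (inv_dist z w).
Proof.
under eq_fun do rewrite kappa_lax.
have iterm a (p : 'I_(m a)) b (q : 'I_(m b)) (c : C) :
    cintegrable circ (fun x => c * kappa f (J a p x) (J b q x)).
  by apply: cintegrableMl; exact: J_integrable.
rewrite cint_sum; last by move=> a; do 3 (apply: cintegrable_sum => ?); exact: iterm.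
apply: eq_bigr => a _; rewrite cint_sum; last first.
  by move=> p; do 2 (apply: cintegrable_sum => ?); exact: iterm.
apply: eq_bigr => p _; rewrite cint_sum; last first.
  by move=> b; apply: cintegrable_sum => ?; exact: iterm.
apply: eq_bigr => b _; rewrite cint_sum //; apply: eq_bigr => q _.
by rewrite cintMl //; exact: J_integrable.
Qed.

(* [Defs.charge]: a bare [charge] would be the measure-theoretic notion of
   MathComp-Analysis. *)
Lemma charge_inv_dist z w : (forall a, w != z a) ->
  Defs.charge f circ m l z linf J w =
  - (2 * dtwist_v m l (inv_dist z w))^-1 * quad_v m f circ J (inv_dist z w).
Proof. by move=> wz; rewrite /Defs.charge derive1_twist // cint_kappa_lax. Qed.

Section Continuity.
Context (T : Type) (F : set_system T) {FF : Filter F}.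
Variables (v : T -> S -> C) (v0 : S -> C).
Hypothesis cvg_v : forall a, v x a @[x --> F] --> v0 a.

Lemma cvg_twist_v : twist_v m l linf (v x) @[x --> F] --> twist_v m l linf v0.
Proof.
apply: cvgB (cvg_cst (RtoC linf)); apply: cvg_sumr => a; apply: cvg_sumr => p.
exact: cvgM (cvg_cst (l a p)) (cvgXn (@cvg_v a)).
Qed.

Lemma cvg_dtwist_v : dtwist_v m l (v x) @[x --> F] --> dtwist_v m l v0.
Proof.
apply: cvg_sumr => a; apply: cvg_sumr => p.
exact: cvgM (cvg_cst (l a p)) (cvgM (cvg_cst (- p.+1%:R : C)) (cvgXn (@cvg_v a))).
Qed.

Lemma cvg_quad_v : quad_v m f circ J (v x) @[x --> F] --> quad_v m f circ J v0.
Proof.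
apply: cvg_sumr => a; apply: cvg_sumr => p; apply: cvg_sumr => b; apply: cvg_sumr => q.
exact: cvgM (cvgM (cvgXn (@cvg_v a)) (cvgXn (@cvg_v b))) (cvg_cst _).
Qed.

End Continuity.

Lemma cvg_charge (T : Type) (F : set_system T) {FF : Filter F}
    (z : T -> S -> C) (w : T -> C) (v0 : S -> C) :
  (\forall x \near F, forall a, w x != z x a) ->
  (forall a, inv_dist (z x) (w x) a @[x --> F] --> v0 a) -> dtwist_v m l v0 != 0 ->
  Defs.charge f circ m l (z x) linf J (w x) @[x --> F] -->
    - (2 * dtwist_v m l v0)^-1 * quad_v m f circ J v0.
Proof.
move=> nonpole cvg_v dtwist0.
have d2 : 2 * dtwist_v m l v0 != 0 by rewrite mulf_neq0 // pnatr_eq0.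
apply: cvg_trans (near_eq_cvg _) _; last first.
  exact: cvgM (cvgN (cvgV d2 (cvgM (cvg_cst _) (cvg_dtwist_v cvg_v)))) (cvg_quad_v cvg_v).
by apply: filterS nonpole => x wz; rewrite charge_inv_dist.
Qed.

End ChargeInCoordinates.

(** * The numerator of the twist function *)

Section TwistNumerator.
Variable R : realType.
Local Notation C := R[i].
Variables (S : finType) (m : S -> nat) (l : S -> nat -> C) (z : S -> C) (linf : R).

Definition pole_poly : {poly C} := \prod_a ('X - (z a)%:P) ^+ m a.

Definition level_poly : {poly C} := \sum_a \sum_(p < m a)
  (l a p)%:P * (('X - (z a)%:P) ^+ (m a - p.+1) * \prod_(b | b != a) ('X - (z b)%:P) ^+ m b).

(* [twist = twist_num / pole_poly] away from the poles: [level_poly] is the sum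
   of the pole parts with the denominators cleared. *)
Definition twist_num : {poly C} := level_poly - (RtoC linf)%:P * pole_poly.

Lemma horner_pole_poly w : pole_poly.[w] = \prod_a (w - z a) ^+ m a.
Proof. by rewrite horner_prod; apply: eq_bigr => a _; rewrite horner_exp hornerXsubC. Qed.

Lemma pole_poly_neq0 w : (forall a, w != z a) -> pole_poly.[w] != 0.
Proof.
by move=> wz; rewrite horner_pole_poly; apply/prodf_neq0 => a _; rewrite expf_neq0 // subr_eq0.
Qed.

Lemma horner_twist_num w : (forall a, w != z a) ->
  twist_num.[w] = twist m l z linf w * pole_poly.[w].
Proof.
move=> wz; rewrite /twist_num /level_poly /twist !hornerE mulrBl; congr (_ - _).
rewrite horner_sum mulr_suml; apply: eq_bigr => a _.
rewrite horner_sum mulr_suml; apply: eq_bigr => p _.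
rewrite hornerM hornerC hornerM horner_exp hornerXsubC horner_prod horner_pole_poly.
under eq_bigr do rewrite horner_exp hornerXsubC.
rewrite [in RHS](bigD1 a) //=.
rewrite [(w - z a) ^+ m a](_ : _ = (w - z a) ^+ p.+1 * (w - z a) ^+ (m a - p.+1)); last first.
  by rewrite -exprD subnKC.
have wza : (w - z a) ^+ p.+1 != 0 by rewrite expf_neq0 // subr_eq0.
by rewrite !mulrA mulfVK.
Qed.

Lemma size_level_poly : (size level_poly <= nsum m)%N.
Proof.
apply: leq_trans (size_sum _ _ _) _; apply/bigmax_leqP => a _.
apply: leq_trans (size_sum _ _ _) _; apply/bigmax_leqP => p _.
rewrite mul_polyC (leq_trans (size_scale_leq _ _)) //.
rewrite size_Mmonic ?monic_neq0 ?monic_exp ?monicXsubC //; last first.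
  by apply: monic_prod => b _; rewrite monic_exp ?monicXsubC.
rewrite size_exp_XsubC size_prod_XsubC_exp /nsum [X in (_ <= X)%N](bigD1 a) //=.
have := ltn_ord p; lia.
Qed.

Hypothesis linf_neq0 : linf != 0.

Lemma twist_num_factor : exists rs : seq C,
  twist_num = - RtoC linf *: \prod_(r <- rs) ('X - r%:P) /\ size rs = nsum m.
Proof.
have linfC : RtoC linf != 0 by rewrite RtoC_eq0.
have size_pole : size ((RtoC linf)%:P * pole_poly) = (nsum m).+1.
  by rewrite size_Cmul // size_prod_XsubC_exp.
have lt_size : (size level_poly < size (- ((RtoC linf)%:P * pole_poly)))%N.
  by rewrite size_polyN size_pole ltnS size_level_poly.
have size_num : size twist_num = (nsum m).+1.
  by rewrite /twist_num addrC size_polyDl // size_polyN.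
have lead_num : lead_coef twist_num = - RtoC linf.
  rewrite /twist_num addrC lead_coefDl // lead_coefN lead_coef_Mmonic ?lead_coefC //.
  by apply: monic_prod => a _; rewrite monic_exp ?monicXsubC.
have [rs num_rs] := closed_field_poly_normal twist_num.
exists rs; rewrite -lead_num; split => //.
move: size_num; rewrite num_rs size_scale ?size_prod_XsubC; first by case.
by rewrite lead_num oppr_eq0.
Qed.

End TwistNumerator.

Section SimpleRoot.
Variable R : realType.
Local Notation C := R[i].
Variables (S : finType) (m : S -> nat) (l : S -> nat -> C) (z : S -> C) (linf : R).

(* The difference quotient of [twist = num / pole_poly] at a root [r0] of
   [num = ('X - r0) * cofactor] is [cofactor / pole_poly], evaluated nearby. *)
Lemma derive1_twist_simple_root (c r0 : C) (rs : seq C) :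
  twist_num m l z linf = c *: \prod_(r <- rs) ('X - r%:P) -> c != 0 -> uniq rs ->
  r0 \in rs -> (forall a, r0 != z a) -> derive1 (twist m l z linf) r0 != 0.
Proof.
move=> num_rs c0 uniq_rs r0rs r0z.
pose cofactor : {poly C} := c *: \prod_(r <- rem r0 rs) ('X - r%:P).
have num_r0 : twist_num m l z linf = ('X - r0%:P) * cofactor.
  by rewrite num_rs (perm_big _ (perm_to_rem r0rs)) big_cons /cofactor scalerAr.
have cofactor_r0 : cofactor.[r0] != 0.
  rewrite hornerZ horner_prod mulf_neq0 // prodf_seq_neq0; apply/allP => r rrs /=.
  by rewrite hornerXsubC subr_eq0; apply: contraTneq rrs => <-; rewrite mem_rem_uniqF.
have pole_r0 := pole_poly_neq0 m r0z.
have twist_r0 : twist m l z linf r0 = 0.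
  have := horner_twist_num m l linf r0z.
  rewrite num_r0 hornerM hornerXsubC subrr mul0r => /esym/eqP.
  by rewrite mulf_eq0 (negbTE pole_r0) orbF => /eqP.
have shift_r0 : h + r0 @[h --> (0 : C)^'] --> r0.
  by rewrite -[X in _ --> X](add0r r0); exact: cvgD (cvg_within _) (cvg_cst r0).
have near_nonpole : \forall h \near (0 : C)^', forall a, h + r0 != z a.
  apply: filter_forall => a; have r0za : 0 < `|r0 - z a| by rewrite normr_gt0 subr_eq0.
  move/cvgrPdist_lt : shift_r0 => /(_ _ r0za); apply: filterS => h.
  by apply: contraTneq => ->; rewrite ltxx.
have quotientE : {near (0 : C)^', (fun h => cofactor.[h + r0] / (pole_poly m z).[h + r0]) =1
    (fun h => h^-1 *: (twist m l z linf (h + r0) - twist m l z linf r0))}.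
  near=> h.
  have h0 : h != 0 by near: h; exact: nbhs_dnbhs_neq.
  have hz : forall a, h + r0 != z a by near: h.
  rewrite twist_r0 subr0 -(mulfK (pole_poly_neq0 m hz) (twist _ _ _ _ _)).
  rewrite -(horner_twist_num m l linf hz) num_r0 hornerM hornerXsubC addrK.
  have scaleE (a b : C) : a *: b = a * b by [].
  by rewrite scaleE -mulrA mulKf.
have lim_quotient : h^-1 *: (twist m l z linf (h + r0) - twist m l z linf r0)
    @[h --> (0 : C)^'] --> cofactor.[r0] / (pole_poly m z).[r0].
  apply: cvg_trans (near_eq_cvg quotientE) _.
  exact: cvgM (cvg_horner shift_r0) (cvgV pole_r0 (cvg_horner shift_r0)).
by rewrite /derive1 (cvg_lim (@norm_hausdorff _ _) lim_quotient) mulf_neq0 ?invr_eq0.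
Unshelve. all: by end_near.
Qed.

End SimpleRoot.

Section RootLocalization.
Variable R : realType.
Local Notation C := R[i].
Variables (S : finType) (m : S -> nat) (l : S -> nat -> C) (linf : R).
Hypothesis linf_neq0 : linf != 0.

Lemma pole_poly_ratio (z : S -> C) (t t' : C) : (forall a, t' != z a) ->
  (pole_poly m z).[t] =
  (pole_poly m z).[t'] * \prod_a (1 + (t - t') * inv_dist z t' a) ^+ m a.
Proof.
move=> t'z; rewrite !horner_pole_poly -big_split /=; apply: eq_bigr => a _.
have t'za : t' - z a != 0 by rewrite subr_eq0.
by rewrite -exprMn /inv_dist mulrDr mulr1 mulrCA mulfV // mulr1; congr (_ ^+ _); ring.
Qed.

(* Writing [num = c * prod (X - r)] and [num = twist * pole_poly], the hypothesis
   compares [|num t| * (d + |t - t'|) ^ N] with [d ^ N * |num t'|]. *)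
Lemma exists_root_close (z : S -> C) (t t' d : C) : 0 < d ->
  (forall a, t != z a) -> (forall a, t' != z a) ->
  `|twist_v m l linf (inv_dist z t) * \prod_a (1 + (t - t') * inv_dist z t' a) ^+ m a
      * (d + `|t - t'|) ^+ nsum m| <
    `|d ^+ nsum m * twist_v m l linf (inv_dist z t')| ->
  exists r, root (twist_num m l z linf) r /\ `|r - t| < d.
Proof.
move=> d0 tz t'z lt_twist.
have [rs [num_rs size_rs]] := twist_num_factor m l z linf_neq0.
have K0 : 0 <= d + `|t - t'| by rewrite addr_ge0 // ltW.
have cpos : 0 < `|- RtoC linf| by rewrite normr_gt0 oppr_eq0 RtoC_eq0.
have norm_num w : `|(twist_num m l z linf).[w]| = `|- RtoC linf| * \prod_(r <- rs) `|w - r|.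
  rewrite num_rs hornerZ horner_prod normrM normr_prod.
  by congr (_ * _); apply: eq_bigr => r _; rewrite hornerXsubC.
have pole_t' := pole_poly_neq0 m t'z.
have lhsE : `|- RtoC linf| * (\prod_(r <- rs) `|t - r| * (d + `|t - t'|) ^+ nsum m) =
    `|twist_v m l linf (inv_dist z t) * \prod_a (1 + (t - t') * inv_dist z t' a) ^+ m a
      * (d + `|t - t'|) ^+ nsum m| * `|(pole_poly m z).[t']|.
  rewrite mulrA -norm_num horner_twist_num // (pole_poly_ratio t t'z) twist_inv_dist.
  by rewrite !normrM normrX (ger0_norm K0); ring.
have rhsE : `|- RtoC linf| * (d ^+ nsum m * \prod_(r <- rs) `|t' - r|) =
    `|d ^+ nsum m * twist_v m l linf (inv_dist z t')| * `|(pole_poly m z).[t']|.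
  rewrite mulrCA -norm_num horner_twist_num // twist_inv_dist.
  by rewrite !normrM normrX (gtr0_norm d0); ring.
have [r [rrs near_r]] : exists r, r \in rs /\ `|r - t| < d.
  apply: (exists_near_root (t' := t') d0).
  by rewrite -(ltr_pM2l cpos) size_rs lhsE rhsE ltr_pM2r ?normr_gt0.
by exists r; rewrite num_rs rootZ ?root_prod_XsubC // oppr_eq0 RtoC_eq0.
Qed.

(* [twist t --> 0] while [twist t' --> twist_v v0' <> 0] and the ratio of the
   [pole_poly] values at [t] and [t'] stays bounded. *)
Lemma near_root_close (T : Type) (F : set_system T) {FF : Filter F}
    (z : T -> S -> C) (t t' : T -> C) (D : C) (v0 v0' : S -> C) (d : C) :
  0 < d -> (forall x, t x - t' x = D) ->
  (\forall x \near F, (forall a, t x != z x a) /\ (forall a, t' x != z x a)) ->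
  (forall a, inv_dist (z x) (t x) a @[x --> F] --> v0 a) ->
  (forall a, inv_dist (z x) (t' x) a @[x --> F] --> v0' a) ->
  twist_v m l linf v0 = 0 -> twist_v m l linf v0' != 0 ->
  \forall x \near F, exists r, root (twist_num m l (z x) linf) r /\ `|r - t x| < d.
Proof.
move=> d0 tt' nonpole cvg_v cvg_v' twist0 twist0'.
have lim_twist : twist_v m l linf (inv_dist (z x) (t x)) @[x --> F] --> twist_v m l linf v0.
  exact: cvg_twist_v.
have lim_twist' : twist_v m l linf (inv_dist (z x) (t' x)) @[x --> F] --> twist_v m l linf v0'.
  exact: cvg_twist_v.
pose ratio x := \prod_a (1 + D * inv_dist (z x) (t' x) a) ^+ m a.
pose K := (d + `|D|) ^+ nsum m.
have lim_small : twist_v m l linf (inv_dist (z x) (t x)) * ratio x * K @[x --> F] --> 0.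
  rewrite -(mul0r (\prod_a (1 + D * v0' a) ^+ m a * K)) -twist0 mulrA.
  apply: cvgM (cvgM lim_twist _) (cvg_cst _).
  apply: cvg_prodr => a; apply: cvgXn.
  exact: cvgD (cvg_cst _) (cvgM (cvg_cst D) (cvg_v' a)).
have lim_big : d ^+ nsum m * twist_v m l linf (inv_dist (z x) (t' x)) @[x --> F] -->
    d ^+ nsum m * twist_v m l linf v0'.
  exact: cvgM (cvg_cst _) lim_twist'.
have big0 : d ^+ nsum m * twist_v m l linf v0' != 0.
  by rewrite mulf_neq0 // expf_neq0 // lt0r_neq0.
near=> x.
have [tz t'z] : (forall a, t x != z x a) /\ (forall a, t' x != z x a) by near: x.
apply: exists_root_close d0 tz t'z _; rewrite tt'.
by near: x; exact: near_norm_lt lim_small lim_big big0.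
Unshelve. all: by end_near.
Qed.

End RootLocalization.

(** * The coupled model *)

Section SumOfModels.
Variable R : realType.
Local Notation C := R[i].
Variables (S1 S2 : finType) (m1 : S1 -> nat) (m2 : S2 -> nat).
Variables (l1 : S1 -> nat -> C) (l2 : S2 -> nat -> C).

Lemma nsum_sumf : nsum (sumf m1 m2) = (nsum m1 + nsum m2)%N.
Proof. by rewrite /nsum big_sumType. Qed.

Lemma twist_v_sumf_l linf (v1 : S1 -> C) :
  twist_v (sumf m1 m2) (sumf l1 l2) linf (sumf v1 (fun _ => 0)) = twist_v m1 l1 linf v1.
Proof.
rewrite /twist_v big_sumType /=; congr (_ - _); rewrite [X in _ + X]big1 ?addr0 // => b _.
by apply: big1 => p _; rewrite expr0n mulr0.
Qed.

Lemma twist_v_sumf_r linf (v2 : S2 -> C) :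
  twist_v (sumf m1 m2) (sumf l1 l2) linf (sumf (fun _ => 0) v2) = twist_v m2 l2 linf v2.
Proof.
rewrite /twist_v big_sumType /=; congr (_ - _); rewrite [X in X + _]big1 ?add0r // => a _.
by apply: big1 => p _; rewrite expr0n mulr0.
Qed.

Lemma dtwist_v_sumf_l (v1 : S1 -> C) :
  dtwist_v (sumf m1 m2) (sumf l1 l2) (sumf v1 (fun _ => 0)) = dtwist_v m1 l1 v1.
Proof.
rewrite /dtwist_v big_sumType /= [X in _ + X]big1 ?addr0 // => b _.
by apply: big1 => p _; rewrite expr0n !mulr0.
Qed.

Lemma dtwist_v_sumf_r (v2 : S2 -> C) :
  dtwist_v (sumf m1 m2) (sumf l1 l2) (sumf (fun _ => 0) v2) = dtwist_v m2 l2 v2.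
Proof.
rewrite /dtwist_v big_sumType /= [X in X + _]big1 ?add0r // => a _.
by apply: big1 => p _; rewrite expr0n !mulr0.
Qed.

Variables (n : nat) (f : 'I_n -> 'I_n -> 'I_n -> C) (circ : option R).
Variables (J1 : S1 -> nat -> R -> 'rV[C]_n) (J2 : S2 -> nat -> R -> 'rV[C]_n).

Lemma quad_v_sumf_l (v1 : S1 -> C) :
  quad_v (sumf m1 m2) f circ (sumf J1 J2) (sumf v1 (fun _ => 0)) = quad_v m1 f circ J1 v1.
Proof.
rewrite /quad_v big_sumType /= [X in _ + X]big1 ?addr0; last first.
  move=> b _; apply: big1 => p _; apply: big1 => a _; apply: big1 => q _.
  by rewrite expr0n !mul0r.
apply: eq_bigr => a _; apply: eq_bigr => p _.
rewrite big_sumType /= [X in _ + X]big1 ?addr0 // => b _; apply: big1 => q _.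
by rewrite expr0n mulr0 mul0r.
Qed.

Lemma quad_v_sumf_r (v2 : S2 -> C) :
  quad_v (sumf m1 m2) f circ (sumf J1 J2) (sumf (fun _ => 0) v2) = quad_v m2 f circ J2 v2.
Proof.
rewrite /quad_v big_sumType /= [X in X + _]big1 ?add0r; last first.
  move=> a _; apply: big1 => p _; apply: big1 => b _; apply: big1 => q _.
  by rewrite expr0n !mul0r.
apply: eq_bigr => b _; apply: eq_bigr => p _.
rewrite big_sumType /= [X in X + _]big1 ?add0r // => a _; apply: big1 => q _.
by rewrite expr0n mulr0 mul0r.
Qed.

End SumOfModels.

Section CoupledInverseDistances.
Variable R : realType.
Local Notation C := R[i].
Variables (S1 S2 : finType) (z1 : S1 -> C) (z2 : S2 -> C) (w : R -> C).

(* Seen from a point that stays near the first model, the poles of the second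
   one escape to infinity, and conversely. *)
Lemma cvg_inv_dist_cpos_l (p : C) : (forall a, p != z1 a) ->
  w g @[g --> (0 : R)^'] --> p ->
  forall s, inv_dist (cpos z1 z2 g) (w g) s @[g --> (0 : R)^'] -->
    sumf (inv_dist z1 p) (fun _ => 0) s.
Proof.
move=> pz1 wp [a|b] /=; rewrite /inv_dist /=.
  by apply: cvgV (cvgB wp (cvg_cst (z1 a))); rewrite subr_eq0.
under eq_fun do rewrite opprD addrA.
exact: cvg_shift_inv0 (cvgB wp (cvg_cst (z2 b))).
Qed.

Lemma cvg_inv_dist_cpos_r (p : C) : (forall b, p != z2 b) ->
  w g - RtoC g^-1 @[g --> (0 : R)^'] --> p ->
  forall s, inv_dist (cpos z1 z2 g) (w g) s @[g --> (0 : R)^'] -->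
    sumf (fun _ => 0) (inv_dist z2 p) s.
Proof.
move=> pz2 wp [a|b] /=; rewrite /inv_dist /=.
  have E g : w g - z1 a = - (z1 a - (w g - RtoC g^-1) - RtoC g^-1) by ring.
  under eq_fun do rewrite E invrN.
  by rewrite -oppr0; exact: cvgN (cvg_shift_inv0 (cvgB (cvg_cst (z1 a)) wp)).
have E g : w g - (z2 b + RtoC g^-1) = w g - RtoC g^-1 - z2 b by ring.
under eq_fun do rewrite E.
by apply: cvgV (cvgB wp (cvg_cst (z2 b))); rewrite subr_eq0.
Qed.

End CoupledInverseDistances.

Lemma sum_idx_lshift (M1 M2 : nat) (X : Type) (e1 : 'I_M1 -> X) (e2 : 'I_M2 -> X) i :
  sum_idx e1 e2 (lshift M2 i) = e1 i.
Proof. by rewrite /sum_idx (unsplitK (inl i : 'I_M1 + 'I_M2)). Qed.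

Lemma sum_idx_rshift (M1 M2 : nat) (X : Type) (e1 : 'I_M1 -> X) (e2 : 'I_M2 -> X) j :
  sum_idx e1 e2 (rshift M1 j) = e2 j.
Proof. by rewrite /sum_idx (unsplitK (inr j : 'I_M1 + 'I_M2)). Qed.

Lemma exists_regular_point (R : realType) (S : finType) (m : S -> nat) (l : S -> nat -> R[i])
    (z : S -> R[i]) (linf : R) (M : nat) (zeta : 'I_M -> R[i]) :
  simple_zero_enum (twist m l z linf) (range z) zeta ->
  exists t, (forall a, t != z a) /\ twist m l z linf t != 0.
Proof.
move=> [_ _ all_zeros].
have [t t_notin] := exists_notin_seq ([seq z a | a <- enum S] ++ [seq zeta i | i <- enum 'I_M]).
have tz a : t != z a.
  by apply: contraNneq t_notin => ->; rewrite mem_cat map_f ?mem_enum.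
exists t; split => //; apply/negP => /eqP twist0.
have [|i ti] := all_zeros t _ twist0; first by move=> [a _ eq_za]; move: (tz a); rewrite eq_za eqxx.
by move: t_notin; rewrite mem_cat ti [X in _ || X]map_f ?mem_enum ?orbT.
Qed.

Lemma hamiltonian_sum_idx (R : realType) n (f : 'I_n -> 'I_n -> 'I_n -> R[i]) (circ : option R)
    (S : finType) (m : S -> nat) (l : S -> nat -> R[i]) (z : S -> R[i]) (linf : R)
    (J : S -> nat -> R -> 'rV[R[i]]_n) (M1 M2 : nat) (zeta : 'I_(M1 + M2) -> R[i])
    (eps1 : 'I_M1 -> R[i]) (eps2 : 'I_M2 -> R[i]) :
  hamiltonian f circ m l z linf J zeta (sum_idx eps1 eps2) =
  \sum_(i < M1) eps1 i * Defs.charge f circ m l z linf J (zeta (lshift M2 i)) +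
  \sum_(j < M2) eps2 j * Defs.charge f circ m l z linf J (zeta (rshift M1 j)).
Proof.
rewrite /hamiltonian big_split_ord /=.
by congr (_ + _); apply: eq_bigr => i _; rewrite ?sum_idx_lshift ?sum_idx_rshift.
Qed.

Section CoupledModel.
Variable R : realType.
Local Notation C := R[i].
Variables (linf : R) (S1 S2 : finType) (m1 : S1 -> nat) (m2 : S2 -> nat).
Variables (l1 : S1 -> nat -> C) (l2 : S2 -> nat -> C) (z1 : S1 -> C) (z2 : S2 -> C).
Variables (zeta1 : 'I_(nsum m1) -> C) (zeta2 : 'I_(nsum m2) -> C).
Hypothesis linf_neq0 : linf != 0.
Hypothesis zeta1_zeros : simple_zero_enum (twist m1 l1 z1 linf) (range z1) zeta1.
Hypothesis zeta2_zeros : simple_zero_enum (twist m2 l2 z2 linf) (range z2) zeta2.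

Local Notation M1 := (nsum m1).
Local Notation M2 := (nsum m2).
Local Notation mc := (sumf m1 m2).
Local Notation lc := (sumf l1 l2).
Local Notation wc g := (cpos z1 z2 g).
Local Notation num g := (twist_num mc lc (wc g) linf).

Definition target (g : R) : 'I_(M1 + M2) -> C := sum_idx zeta1 (fun j => zeta2 j + RtoC g^-1).

Lemma target_l g i : target g (lshift M2 i) = zeta1 i.
Proof. exact: sum_idx_lshift. Qed.

Lemma target_r g j : target g (rshift M1 j) = zeta2 j + RtoC g^-1.
Proof. exact: sum_idx_rshift. Qed.

Lemma zeta1_nonpole i a : zeta1 i != z1 a.
Proof.
have [_ /(_ i)[nonpole _] _] := zeta1_zeros.
by apply/eqP => eq_za; apply: nonpole; exists a.
Qed.

Lemma zeta2_nonpole j b : zeta2 j != z2 b.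
Proof.
have [_ /(_ j)[nonpole _] _] := zeta2_zeros.
by apply/eqP => eq_zb; apply: nonpole; exists b.
Qed.

Definition targets_separated (d : C) (g : R) : Prop :=
  (forall i j, i != j -> d * 2 <= `|target g i - target g j|) /\
  (forall i s, d <= `|target g i - wc g s|).

Lemma near_targets_separated : exists2 d, 0 < d & \forall g \near (0 : R)^', targets_separated d g.
Proof.
have [inj1 _ _] := zeta1_zeros; have [inj2 _ _] := zeta2_zeros.
have far (c : C) : \forall g \near (0 : R)^', 1 <= `|c - RtoC g^-1|.
  exact: near_shift_far ltr01 (cvg_cst c).
have [e1 e1pos near_e1] : exists2 e : C, 0 < e & \forall g \near (0 : R)^',
    forall p : 'I_(M1 + M2) * 'I_(M1 + M2), p.1 != p.2 -> e <= `|target g p.1 - target g p.2|.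
  apply: near_lbound_fin => -[i j] /=.
  case: (split_ordP i) => i' ->; case: (split_ordP j) => j' -> ij.
  - exists `|zeta1 i' - zeta1 j'|; last by apply: nearW => g; rewrite !target_l.
    by rewrite normr_gt0 subr_eq0; apply: contra ij => /eqP/inj1 ->.
  - exists 1 => //; apply: filterS (far (zeta1 i' - zeta2 j')) => g.
    by rewrite target_l target_r opprD addrA.
  - exists 1 => //; apply: filterS (far (zeta1 j' - zeta2 i')) => g.
    by rewrite target_l target_r [X in _ -> _ <= X]distrC opprD addrA.
  - exists `|zeta2 i' - zeta2 j'|; last first.
      by apply: nearW => g; rewrite !target_r opprD addrACA subrr addr0.
    by rewrite normr_gt0 subr_eq0; apply: contra ij => /eqP/inj2 ->.
have [e2 e2pos near_e2] : exists2 e : C, 0 < e & \forall g \near (0 : R)^',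
    forall p : 'I_(M1 + M2) * (S1 + S2), predT p -> e <= `|target g p.1 - wc g p.2|.
  apply: near_lbound_fin => -[i [a|b]] _ /=; case: (split_ordP i) => i' ->.
  - exists `|zeta1 i' - z1 a|; last by apply: nearW => g; rewrite target_l.
    by rewrite normr_gt0 subr_eq0 zeta1_nonpole.
  - exists 1 => //; apply: filterS (far (z1 a - zeta2 i')) => g.
    by rewrite target_r [X in _ -> _ <= X]distrC opprD addrA.
  - exists 1 => //; apply: filterS (far (zeta1 i' - z2 b)) => g.
    by rewrite target_l opprD addrA.
  - exists `|zeta2 i' - z2 b|; last first.
      by apply: nearW => g; rewrite target_r opprD addrACA subrr addr0.
    by rewrite normr_gt0 subr_eq0 zeta2_nonpole.
have [d dpos [de1 de2]] := posr_lbound2 (divr_gt0 e1pos (ltr0n _ 2)) e2pos.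
exists d => //; near=> g.
have [sep1 sep2] : (forall p : 'I_(M1 + M2) * 'I_(M1 + M2),
      p.1 != p.2 -> e1 <= `|target g p.1 - target g p.2|) /\
    (forall p : 'I_(M1 + M2) * (S1 + S2), predT p -> e2 <= `|target g p.1 - wc g p.2|).
  by split; near: g.
split=> [i j ij | i s]; last exact: le_trans de2 (sep2 (i, s) isT).
by apply: le_trans _ (sep1 (i, j) ij); rewrite -ler_pdivlMr.
Unshelve. all: by end_near.
Qed.

Lemma target_disks_disjoint d g : targets_separated d g ->
  forall i j w, `|w - target g i| < d -> `|w - target g j| < d -> i = j.
Proof.
move=> [sep _] i j w wi wj; apply/eqP; apply: contraT => ij.
have : `|target g i - target g j| < d * 2.
  apply: le_lt_trans (ler_distD w _ _) _.
  by rewrite distrC mulr_natr mulr2n ltrD.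
by move/(le_lt_trans (sep i j ij)); rewrite ltxx.
Qed.

Lemma target_disk_nonpole d g : targets_separated d g ->
  forall i w, `|w - target g i| < d -> forall s, w != wc g s.
Proof.
move=> [_ sep] i w wi s; apply: contraTneq wi => ->.
by rewrite distrC; apply/negP => /(le_lt_trans (sep i s)); rewrite ltxx.
Qed.

Lemma near_nonpole_l p : (forall a, p != z1 a) ->
  \forall g \near (0 : R)^', forall s, p != wc g s.
Proof.
move=> pz1; apply: filter_forall => -[a|b] /=; first exact: nearW.
apply: filterS (near_shift_neq0 (cvg_cst (p - z2 b))) => g.
by apply: contra_neq => ->; ring.
Qed.

Lemma near_nonpole_r p : (forall b, p != z2 b) ->
  \forall g \near (0 : R)^', forall s, p + RtoC g^-1 != wc g s.
Proof.
move=> pz2; apply: filter_forall => -[a|b] /=.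
  apply: filterS (near_shift_neq0 (cvg_cst (z1 a - p))) => g.
  by apply: contra_neq => <-; ring.
by apply: nearW => g; rewrite (inj_eq (addIr _)).
Qed.

Lemma near_root_near_target (d : C) : 0 < d -> forall i,
  \forall g \near (0 : R)^', exists r, root (num g) r /\ `|r - target g i| < d.
Proof.
move=> d0 i; have [_ zeros1 _] := zeta1_zeros; have [_ zeros2 _] := zeta2_zeros.
case: (split_ordP i) => j ->.
  have [t [tz twist_t]] := exists_regular_point zeta1_zeros.
  have : \forall g \near (0 : R)^', exists r, root (num g) r /\ `|r - zeta1 j| < d.
    apply: (near_root_close (t := fun _ => zeta1 j) (t' := fun _ => t) (D := zeta1 j - t)
      (v0 := sumf (inv_dist z1 (zeta1 j)) (fun _ => 0))
      (v0' := sumf (inv_dist z1 t) (fun _ => 0)) linf_neq0 d0) => //.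
    - by near=> g; split; near: g; apply: near_nonpole_l => // a; exact: zeta1_nonpole.
    - exact: cvg_inv_dist_cpos_l (@zeta1_nonpole j) (cvg_cst _).
    - exact: cvg_inv_dist_cpos_l tz (cvg_cst _).
    - by rewrite twist_v_sumf_l -twist_inv_dist; case: (zeros1 j) => _ [].
    - by rewrite twist_v_sumf_l -twist_inv_dist.
  by apply: filterS => g; rewrite target_l.
have [t [tz twist_t]] := exists_regular_point zeta2_zeros.
have shift_back (p : C) : p + RtoC g^-1 - RtoC g^-1 @[g --> (0 : R)^'] --> p.
  by under eq_fun do rewrite addrK; exact: cvg_cst.
have : \forall g \near (0 : R)^', exists r, root (num g) r /\ `|r - (zeta2 j + RtoC g^-1)| < d.
  apply: (near_root_close (t := fun g => zeta2 j + RtoC g^-1) (t' := fun g => t + RtoC g^-1)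
    (D := zeta2 j - t) (v0 := sumf (fun _ => 0) (inv_dist z2 (zeta2 j)))
    (v0' := sumf (fun _ => 0) (inv_dist z2 t)) linf_neq0 d0).
  - by move=> g; ring.
  - by near=> g; split; near: g; apply: near_nonpole_r => // b; exact: zeta2_nonpole.
  - exact: cvg_inv_dist_cpos_r (@zeta2_nonpole j) (shift_back _).
  - exact: cvg_inv_dist_cpos_r tz (shift_back _).
  - by rewrite twist_v_sumf_r -twist_inv_dist; case: (zeros2 j) => _ [].
  - by rewrite twist_v_sumf_r -twist_inv_dist.
by apply: filterS => g; rewrite target_r.
Unshelve. all: by end_near.
Qed.

(* Meaningful only when the disk of radius [d] around the target contains
   exactly one root of [num g]; [xget] returns [0] when it contains none. *)
Definition coupled_zero (d : C) (g : R) (i : 'I_(M1 + M2)) : C :=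
  xget 0 [set r | root (num g) r /\ `|r - target g i| < d].

Lemma coupled_zero_spec d g : targets_separated d g ->
  (forall i, exists r, root (num g) r /\ `|r - target g i| < d) ->
  [/\ simple_zero_enum (twist mc lc (wc g) linf) (range (wc g)) (coupled_zero d g),
      forall i, `|coupled_zero d g i - target g i| < d &
      forall i r, root (num g) r -> `|r - target g i| < d -> coupled_zero d g i = r].
Proof.
move=> sep hit.
have [rs [num_rs size_rs]] := twist_num_factor mc lc (wc g) linf_neq0.
have c0 : - RtoC linf != 0 by rewrite oppr_eq0 RtoC_eq0.
have rootE r : root (num g) r = (r \in rs) by rewrite num_rs rootZ // root_prod_XsubC.
have hit_rs i : exists r, r \in rs /\ `|r - target g i| < d.
  by have [r [rr rd]] := hit i; exists r; rewrite -rootE.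
rewrite nsum_sumf in size_rs.
have [uniq_rs rs_hit rs_unique] := one_root_per_disk size_rs (target_disks_disjoint sep) hit_rs.
have unique i r : root (num g) r -> `|r - target g i| < d -> coupled_zero d g i = r.
  move=> rr rd; apply: xget_unique => [|r' [r'r r'd]]; first by split.
  by apply: rs_unique r'd rd; rewrite -rootE.
have zeroP i : root (num g) (coupled_zero d g i) /\ `|coupled_zero d g i - target g i| < d.
  have [r rP] := hit i.
  by apply: (@xgetPex _ 0 [set r | root (num g) r /\ `|r - target g i| < d]); exists r.
have nonpole i s : coupled_zero d g i != wc g s := target_disk_nonpole sep (zeroP i).2 s.
split=> //; last by move=> i; exact: (zeroP i).2.
split.
- move=> i j eq_ij; apply: (target_disks_disjoint sep (zeroP i).2).
  by rewrite eq_ij; exact: (zeroP j).2.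
- move=> i; split; first by case=> s _ eq_s; move: (nonpole i s); rewrite eq_s eqxx.
  split.
    have := (zeroP i).1; rewrite /root (horner_twist_num mc lc linf (nonpole i)) mulf_eq0.
    by rewrite (negbTE (pole_poly_neq0 mc (nonpole i))) orbF => /eqP.
  by apply: derive1_twist_simple_root num_rs c0 uniq_rs _ (nonpole i); rewrite -rootE (zeroP i).1.
- move=> w w_nonpole twist0.
  have w_root : root (num g) w.
    have wz s : w != wc g s by apply: contra_not_neq w_nonpole => ->; exists s.
    by rewrite /root (horner_twist_num mc lc linf wz) twist0 mul0r.
  have [i wi] : exists i, `|w - target g i| < d by apply: rs_hit; rewrite -rootE.
  by exists i; rewrite (unique i w w_root wi).
Qed.

Lemma exists_coupled_zero_ordering :
  exists zeta, coupled_zero_ordering m1 m2 l1 l2 z1 z2 linf zeta1 zeta2 zeta.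
Proof.
have [d d0 near_sep] := near_targets_separated.
have near_hit : \forall g \near (0 : R)^', targets_separated d g /\
    forall i, exists r, root (num g) r /\ `|r - target g i| < d.
  near=> g; split; near: g; first exact: near_sep.
  by apply: filter_forall => i; exact: near_root_near_target.
have close i (e : C) : 0 < e -> \forall g \near (0 : R)^', `|coupled_zero d g i - target g i| < e.
  move=> e0; have [e' e'0 [e'e e'd]] := posr_lbound2 e0 d0.
  near=> g.
  have [sep hit] : targets_separated d g /\
      forall i, exists r, root (num g) r /\ `|r - target g i| < d.
    by near: g.
  have [r [rr re']] : exists r, root (num g) r /\ `|r - target g i| < e'.
    by near: g; exact: near_root_near_target.
  have [_ _ unique] := coupled_zero_spec sep hit.
  by rewrite (unique i r rr (lt_le_trans re' e'd)); exact: lt_le_trans re' e'e.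
exists (coupled_zero d); split.
- apply/near_dnbhs0P; apply: filterS near_hit => g [sep hit].
  by have [] := coupled_zero_spec sep hit.
- move=> i; apply/cvgrPdist_lt => e e0; apply: filterS (close (lshift M2 i) _ e0) => g.
  by rewrite target_l distrC.
- move=> j; apply/cvgrPdist_lt => e e0; apply: filterS (close (rshift M1 j) _ e0) => g.
  rewrite target_r; have -> : zeta2 j - (coupled_zero d g (rshift M1 j) - RtoC g^-1) =
    - (coupled_zero d g (rshift M1 j) - (zeta2 j + RtoC g^-1)) by ring.
  by rewrite normrN.
Unshelve. all: by end_near.
Qed.

Section CoupledCharges.
Variables (n : nat) (f : 'I_n -> 'I_n -> 'I_n -> C) (circ : option R).
Variables (J1 : S1 -> nat -> R -> 'rV[C]_n) (J2 : S2 -> nat -> R -> 'rV[C]_n).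
Variable zeta : R -> 'I_(M1 + M2) -> C.
Hypothesis zeta_ordering : coupled_zero_ordering m1 m2 l1 l2 z1 z2 linf zeta1 zeta2 zeta.
Hypothesis J_integrable : forall a b p q, (p < mc a)%N -> (q < mc b)%N ->
  cintegrable circ (fun x => kappa f (sumf J1 J2 a p x) (sumf J1 J2 b q x)).

Lemma near_zeta_nonpole i : \forall g \near (0 : R)^', forall s, zeta g i != wc g s.
Proof.
have [/near_dnbhs0P near_zeros _ _] := zeta_ordering.
apply: filterS near_zeros => g [_ /(_ i)[nonpole _] _] s.
by apply/eqP => eq_s; apply: nonpole; exists s.
Qed.

Lemma cvg_coupled_charge_l i :
  Defs.charge f circ mc lc (wc g) linf (sumf J1 J2) (zeta g (lshift M2 i)) @[g --> (0 : R)^'] -->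
  Defs.charge f circ m1 l1 z1 linf J1 (zeta1 i).
Proof.
have [_ cvg_l _] := zeta_ordering; have [_ /(_ i)[_ [_ dtwist0]] _] := zeta1_zeros.
have J1_integrable a b p q : (p < m1 a)%N -> (q < m1 b)%N ->
    cintegrable circ (fun x => kappa f (J1 a p x) (J1 b q x)).
  exact: (@J_integrable (inl a) (inl b) p q).
rewrite (charge_inv_dist l1 linf J1_integrable (@zeta1_nonpole i)).
rewrite -(dtwist_v_sumf_l m1 m2 l1 l2) -(quad_v_sumf_l m1 m2 f circ J1 J2).
apply: (cvg_charge linf J_integrable (near_zeta_nonpole _)).
  exact: (cvg_inv_dist_cpos_l z2 (@zeta1_nonpole i) (cvg_l i)).
by rewrite dtwist_v_sumf_l -(derive1_twist m1 l1 linf) //; exact: zeta1_nonpole.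
Qed.

Lemma cvg_coupled_charge_r j :
  Defs.charge f circ mc lc (wc g) linf (sumf J1 J2) (zeta g (rshift M1 j)) @[g --> (0 : R)^'] -->
  Defs.charge f circ m2 l2 z2 linf J2 (zeta2 j).
Proof.
have [_ _ cvg_r] := zeta_ordering; have [_ /(_ j)[_ [_ dtwist0]] _] := zeta2_zeros.
have J2_integrable a b p q : (p < m2 a)%N -> (q < m2 b)%N ->
    cintegrable circ (fun x => kappa f (J2 a p x) (J2 b q x)).
  exact: (@J_integrable (inr a) (inr b) p q).
rewrite (charge_inv_dist l2 linf J2_integrable (@zeta2_nonpole j)).
rewrite -(dtwist_v_sumf_r m1 m2 l1 l2) -(quad_v_sumf_r m1 m2 f circ J1 J2).
apply: (cvg_charge linf J_integrable (near_zeta_nonpole _)).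
  exact: (cvg_inv_dist_cpos_r z1 (@zeta2_nonpole j) (cvg_r j)).
by rewrite dtwist_v_sumf_r -(derive1_twist m2 l2 linf) //; exact: zeta2_nonpole.
Qed.

Lemma cvg_coupled_hamiltonian (eps1 : 'I_M1 -> C) (eps2 : 'I_M2 -> C) :
  hamiltonian f circ mc lc (wc g) linf (sumf J1 J2) (zeta g) (sum_idx eps1 eps2)
    @[g --> (0 : R)^'] -->
  hamiltonian f circ m1 l1 z1 linf J1 zeta1 eps1 + hamiltonian f circ m2 l2 z2 linf J2 zeta2 eps2.
Proof.
under eq_fun do rewrite hamiltonian_sum_idx.
apply: cvgD; apply: cvg_sumr => i; apply: cvgM (cvg_cst _) _.
  exact: cvg_coupled_charge_l.
exact: cvg_coupled_charge_r.
Qed.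

End CoupledCharges.

End CoupledModel.

Theorem theorem2p1 (R : realType) (n : nat) (f : 'I_n -> 'I_n -> 'I_n -> R[i])
    (tau : 'rV[R[i]]_n -> 'rV[R[i]]_n) (circ : option R) (linf : R)
    (S1 S2 : finType) (sg1 : S1 -> S1) (sg2 : S2 -> S2)
    (m1 : S1 -> nat) (m2 : S2 -> nat)
    (l1 : S1 -> nat -> R[i]) (l2 : S2 -> nat -> R[i])
    (z1 : S1 -> R[i]) (z2 : S2 -> R[i])
    (zeta1 : 'I_(nsum m1) -> R[i]) (zeta2 : 'I_(nsum m2) -> R[i])
    (eps1 : 'I_(nsum m1) -> R[i]) (eps2 : 'I_(nsum m2) -> R[i]) :
  is_simple_lie f ->
  is_real_form f tau ->
  (forall L, circ = Some L -> 0 < L) ->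
  linf != 0 ->
  is_realisation sg1 m1 l1 z1 ->
  is_realisation sg2 m2 l2 z2 ->
  simple_zero_enum (twist m1 l1 z1 linf) (range z1) zeta1 ->
  simple_zero_enum (twist m2 l2 z2 linf) (range z2) zeta2 ->
  (exists zeta : R -> 'I_(nsum m1 + nsum m2) -> R[i],
      coupled_zero_ordering m1 m2 l1 l2 z1 z2 linf zeta1 zeta2 zeta) /\
  (forall zeta : R -> 'I_(nsum m1 + nsum m2) -> R[i],
      coupled_zero_ordering m1 m2 l1 l2 z1 z2 linf zeta1 zeta2 zeta ->
      forall (J1 : S1 -> nat -> R -> 'rV[R[i]]_n) (J2 : S2 -> nat -> R -> 'rV[R[i]]_n),
        admissible_config f tau circ (sum_sg sg1 sg2) (sumf m1 m2) (sumf J1 J2) ->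
        hamiltonian f circ (sumf m1 m2) (sumf l1 l2) (cpos z1 z2 g) linf (sumf J1 J2)
                    (zeta g) (sum_idx eps1 eps2)
          @[g --> (0 : R)^'] -->
        hamiltonian f circ m1 l1 z1 linf J1 zeta1 eps1
        + hamiltonian f circ m2 l2 z2 linf J2 zeta2 eps2).
Proof.
move=> _ _ _ linf_neq0 _ _ zeta1_zeros zeta2_zeros; split.
  exact: (exists_coupled_zero_ordering linf_neq0 zeta1_zeros zeta2_zeros).
move=> zeta zeta_ordering J1 J2 [_ _ J_integrable].
exact: (cvg_coupled_hamiltonian zeta1_zeros zeta2_zeros zeta_ordering J_integrable).
Qed.
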